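(* Let $\mathcal{A}$ and $\mathcal{B}$ be unital normed algebras (over $\mathbb{R}$ or $\mathbb{C}$), let $\mathcal{M}$ be a normed $(\mathcal{A},\mathcal{B})$-bimodule which is faithful as a left $\mathcal{A}$-module and as a right $\mathcal{B}$-module, and let $\mathcal{T}=Tri(\mathcal{A},\mathcal{M},\mathcal{B})$ be the associated unital triangular normed algebra, with identity $\mathbf{1}$ and center $Z(\mathcal{T})$. Let $n>1$ be an integer, let $\gamma$ be an invertible element of $Z(\mathcal{T})$, and let $\Psi,\Omega:\mathcal{T}\to\mathcal{T}$ be linear mappings with $\Omega(\mathbf{1})\in Z(\mathcal{T})$. Suppose that $\Psi$ and $\Omega$ satisfy one of the following: (i) $\Psi(X^n)=\gamma X^{n-1}\Omega(X)=\gamma\,\Omega(X)X^{n-1}$ for all $X\in\mathcal{T}$; (ii) $\Psi(X^n)=\gamma X\,\Omega(X^{n-1})=\gamma\,\Omega(X^{n-1})X$ for all $X\in\mathcal{T}$. Then $\Psi$ and $\Omega$ are both continuous.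
   Context: The triangular algebra $Tri(\mathcal{A},\mathcal{M},\mathcal{B})$ is the set of matrices $\begin{bmatrix} a & m\\ 0 & b\end{bmatrix}$ with $a\in\mathcal{A}$, $m\in\mathcal{M}$, $b\in\mathcal{B}$, under the usual matrix operations. When $\mathcal{A},\mathcal{B}$ are normed algebras and $\mathcal{M}$ is a normed bimodule, $\mathcal{T}$ is normed by $\left\|\begin{bmatrix} a & m\\ 0 & b\end{bmatrix}\right\|=\|a\|_{\mathcal{A}}+\|m\|_{\mathcal{M}}+\|b\|_{\mathcal{B}}$. Its center is $Z(\mathcal{T})=\{a\oplus b: a\in Z(\mathcal{A}),\ b\in Z(\mathcal{B}),\ am=mb \text{ for all } m\in\mathcal{M}\}$. *)

From HB Require Import structures.
From mathcomp Require Import all_boot all_order all_algebra.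
From mathcomp Require Import reals.
From mathcomp.real_closed Require Import complex.
Set Implicit Arguments. Unset Strict Implicit. Unset Printing Implicit Defensive.
Import Order.TTheory GRing.Theory Num.Theory.
Local Open Scope ring_scope.

Definition RorC (R : realType) (isC : bool) : numFieldType :=
  if isC then (R[i] : numFieldType) else (R : numFieldType).

Section Defs.
Variable K : numFieldType.

Definition is_norm (V : lmodType K) (nV : V -> K) : Prop :=
  [/\ forall v, 0 <= nV v,
      forall v, nV v = 0 -> v = 0,
      forall v w, nV (v + w) <= nV v + nV w
    & forall (k : K) v, nV (k *: v) = `|k| * nV v].

Definition is_normed_algebra (A : algType K) (nA : A -> K) : Prop :=
  is_norm nA /\ forall a b, nA (a * b) <= nA a * nA b.

Definition is_bimodule (A B : algType K) (M : lmodType K)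
  (lact : A -> M -> M) (ract : M -> B -> M) : Prop :=
  [/\ (forall a a' m, lact (a + a') m = lact a m + lact a' m)
    /\ (forall a m m', lact a (m + m') = lact a m + lact a m')
    /\ (forall (k : K) a m, lact (k *: a) m = k *: lact a m)
    /\ (forall (k : K) a m, lact a (k *: m) = k *: lact a m)
    /\ (forall a a' m, lact (a * a') m = lact a (lact a' m))
    /\ (forall m, lact 1 m = m),
      (forall m b b', ract m (b + b') = ract m b + ract m b')
    /\ (forall m m' b, ract (m + m') b = ract m b + ract m' b)
    /\ (forall (k : K) m b, ract m (k *: b) = k *: ract m b)
    /\ (forall (k : K) m b, ract (k *: m) b = k *: ract m b)
    /\ (forall m b b', ract m (b * b') = ract (ract m b) b')
    /\ (forall m, ract m 1 = m)
    & forall a m b, lact a (ract m b) = ract (lact a m) b].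

Definition faithful_left (A : algType K) (M : lmodType K)
  (lact : A -> M -> M) : Prop :=
  forall a, (forall m, lact a m = 0) -> a = 0.
Definition faithful_right (B : algType K) (M : lmodType K)
  (ract : M -> B -> M) : Prop :=
  forall b, (forall m, ract m b = 0) -> b = 0.

Definition is_normed_bimodule (A B : algType K) (M : lmodType K)
  (lact : A -> M -> M) (ract : M -> B -> M)
  (nA : A -> K) (nB : B -> K) (nM : M -> K) : Prop :=
  [/\ is_norm nM,
      forall a m, nM (lact a m) <= nA a * nM m
    & forall m b, nM (ract m b) <= nM m * nB b].

Section Tri.
Variables (A : algType K) (M : lmodType K) (B : algType K).
Variables (lact : A -> M -> M) (ract : M -> B -> M).

(* The matrix [[a, m], [0, b]] is represented by the triple (a, m, b). *)
Definition tri : Type := (A * M * B)%type.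

Definition tri_mk (a : A) (m : M) (b : B) : tri := (a, m, b).
Definition tri_a (X : tri) : A := X.1.1.
Definition tri_m (X : tri) : M := X.1.2.
Definition tri_b (X : tri) : B := X.2.

Definition tri_zero : tri := tri_mk 0 0 0.
Definition tri_one : tri := tri_mk 1 0 1.
Definition tri_add (X Y : tri) : tri :=
  tri_mk (tri_a X + tri_a Y) (tri_m X + tri_m Y) (tri_b X + tri_b Y).
Definition tri_opp (X : tri) : tri :=
  tri_mk (- tri_a X) (- tri_m X) (- tri_b X).
Definition tri_scale (k : K) (X : tri) : tri :=
  tri_mk (k *: tri_a X) (k *: tri_m X) (k *: tri_b X).
(* matrix product [[a,m],[0,b]] [[a',m'],[0,b']] = [[aa', am'+mb'],[0,bb']] *)
Definition tri_mul (X Y : tri) : tri :=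
  tri_mk (tri_a X * tri_a Y)
         (lact (tri_a X) (tri_m Y) + ract (tri_m X) (tri_b Y))
         (tri_b X * tri_b Y).
Fixpoint tri_exp (X : tri) (n : nat) : tri :=
  match n with
  | 0 => tri_one
  | n'.+1 => tri_mul X (tri_exp X n')
  end.

Definition tri_norm (nA : A -> K) (nM : M -> K) (nB : B -> K) (X : tri) : K :=
  nA (tri_a X) + nM (tri_m X) + nB (tri_b X).

Definition tri_central (Z : tri) : Prop :=
  forall X, tri_mul Z X = tri_mul X Z.

Definition tri_invertible (X : tri) : Prop :=
  exists Y, tri_mul X Y = tri_one /\ tri_mul Y X = tri_one.

Definition tri_linear (F : tri -> tri) : Prop :=
  (forall X Y, F (tri_add X Y) = tri_add (F X) (F Y)) /\
  (forall (k : K) X, F (tri_scale k X) = tri_scale k (F X)).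

Definition tri_continuous (nA : A -> K) (nM : M -> K) (nB : B -> K)
  (F : tri -> tri) : Prop :=
  forall X (eps : K), 0 < eps -> exists2 delta : K, 0 < delta &
    forall Y, tri_norm nA nM nB (tri_add Y (tri_opp X)) < delta ->
      tri_norm nA nM nB (tri_add (F Y) (tri_opp (F X))) < eps.

End Tri.
End Defs.

From HB Require Import structures.
From mathcomp Require Import all_boot all_order all_algebra.
From mathcomp Require Import reals.
From mathcomp.real_closed Require Import complex.
From mathcomp Require Import ring.
Set Implicit Arguments. Unset Strict Implicit. Unset Printing Implicit Defensive.
Import Order.TTheory GRing.Theory Num.Theory.
Local Open Scope ring_scope.

(* Substituting X = 1 + tY in either identity and comparing the coefficients
   of t and t^2 (the identity is polynomial in the scalar t) shows, after
   cancelling gamma, that D(X) := Omega(X) - Omega(1) X satisfies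
   D(Y^2) = 2 Y D(Y) = 2 D(Y) Y.  Such a map vanishes on a triangular algebra
   with a faithful bimodule: it kills the idempotent e = [[1,0],[0,0]] and
   commutes with it, so it has no off-diagonal part, and faithfulness then
   kills the diagonal blocks.  Hence Omega and Psi are left multiplications by
   Omega(1) and gamma Omega(1), which are bounded since the norm of T is
   submultiplicative. *)

Section VectorIdentities.
Variables (K : numFieldType) (V : lmodType K).

Lemma sum_powers_coef0 N (w : nat -> V) :
  (forall t : K, t != 0 -> \sum_(k < N) t ^+ k *: w k = 0) ->
  forall k, (k < N)%N -> w k = 0.
Proof.
elim: N w => [//|N IH] w H.
(* Comparing the sums at [2 t] and [t] kills the constant term. *)
have wS k : (k < N)%N -> w k.+1 = 0.
  move=> kN; pose w' i := ((2 : K) ^+ i.+1 - 1) *: w i.+1.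
  have : w' k = 0.
    apply: IH kN => t t0.
    have t20 : 2 * t != 0 by rewrite mulf_neq0 // pnatr_eq0.
    apply: (scalerI t0); rewrite scaler0.
    have := H _ t20; rewrite -[RHS](H _ t0) => /eqP.
    rewrite -subr_eq0 -sumrB big_ord_recl !expr0 subrr add0r => /eqP E.
    rewrite -[RHS]E scaler_sumr; apply: eq_bigr => i _.
    by rewrite /w' !scalerA -scalerBl lift0 exprMn !exprS; congr (_ *: _); ring.
  by move/eqP; rewrite scaler_eq0 subr_eq0 gt_eqF ?exprn_egt1 ?ltr1n //= => /eqP.
case=> [_|k /wS //].
have := H 1 (oner_neq0 _); rewrite big_ord_recl expr0 scale1r big1 ?addr0 // => i _.
by rewrite wS ?scaler0.
Qed.

(* [u n] does not occur in the sums; asking [u n = 0] lets the formula cover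
   [k = n]. *)
Lemma sum_powers_coef_shift n (p u v : nat -> V) : u n = 0 ->
  (forall t : K, t != 0 -> \sum_(k < n.+1) t ^+ k *: p k =
      \sum_(k < n) t ^+ k *: u k + t *: \sum_(k < n) t ^+ k *: v k) ->
  forall k, (k <= n)%N -> p k = u k + (if k is k'.+1 then v k' else 0).
Proof.
move=> un H k kn; apply/eqP; rewrite -subr_eq0; apply/eqP.
pose w k := p k - (u k + if k is k'.+1 then v k' else 0).
apply: (@sum_powers_coef0 n.+1 w _ k kn) => t t0.
under eq_bigr do rewrite /w scalerBr scalerDr.
rewrite sumrB big_split /= H // big_ord_recr /= un scaler0 addr0.
rewrite [X in _ - (_ + X)]big_ord_recl /= scaler0 add0r scaler_sumr.
apply/eqP; rewrite subr_eq0; apply/eqP; congr (_ + _).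
by apply: eq_bigr => i _; rewrite scalerA -exprS.
Qed.

Lemma add_eq_twice_of_binomial_coefs N (P X Y W : V) : (0 < N)%N ->
  N.+1%:R *: P = N%:R *: X + Y ->
  'C(N.+1, 2)%:R *: P = 'C(N, 2)%:R *: X + N%:R *: W ->
  X + Y = 2%:R *: W.
Proof.
move=> N_gt0 E1 E2.
have N0 : (N%:R : K) != 0 by rewrite pnatr_eq0 -lt0n.
have := congr1 (fun v => 2%:R *: v) E2.
rewrite /= scalerDr !scalerA -!natrM -!mul_bin_diag !bin1.
rewrite [(N.+1 * _)%N]mulnC [(2 * N)%N]mulnC !natrM -!scalerA E1 -scalerDr.
move=> /(scalerI N0); rewrite -{1}(prednK N_gt0) -addn1 natrD scalerDl scale1r.
by rewrite -addrA; apply: addrI.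
Qed.

Lemma eq0_of_eq_twice (x : V) : x = 2%:R *: x -> x = 0.
Proof. by move=> h; apply: (@addrI _ x); rewrite addr0 -mulr2n -scaler_nat -h. Qed.
End VectorIdentities.

Section TriangularAlgebra.
Variables (K : numFieldType) (A B : algType K) (M : lmodType K).
Variables (lact : A -> M -> M) (ract : M -> B -> M).
Hypothesis hM : is_bimodule lact ract.

Local Notation T := (tri A M B).
Local Notation mul := (tri_mul lact ract).
Local Notation one := (tri_one A M B).
Local Notation exp := (tri_exp lact ract).

Lemma lactDl a a' m : lact (a + a') m = lact a m + lact a' m.
Proof. by case: hM => [[]]. Qed.
Lemma lactDr a m m' : lact a (m + m') = lact a m + lact a m'.
Proof. by case: hM => [[_ []]]. Qed.
Lemma lactZl k a m : lact (k *: a) m = k *: lact a m.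
Proof. by case: hM => [[_ [_ []]]]. Qed.
Lemma lactZr k a m : lact a (k *: m) = k *: lact a m.
Proof. by case: hM => [[_ [_ [_ []]]]]. Qed.
Lemma lactM a a' m : lact (a * a') m = lact a (lact a' m).
Proof. by case: hM => [[_ [_ [_ [_ []]]]]]. Qed.
Lemma lact1 m : lact 1 m = m.
Proof. by case: hM => [[_ [_ [_ [_ []]]]]]. Qed.
Lemma ractDr m b b' : ract m (b + b') = ract m b + ract m b'.
Proof. by case: hM => [_ []]. Qed.
Lemma ractDl m m' b : ract (m + m') b = ract m b + ract m' b.
Proof. by case: hM => [_ [_ []]]. Qed.
Lemma ractZr k m b : ract m (k *: b) = k *: ract m b.
Proof. by case: hM => [_ [_ [_ []]]]. Qed.
Lemma ractZl k m b : ract (k *: m) b = k *: ract m b.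
Proof. by case: hM => [_ [_ [_ [_ []]]]]. Qed.
Lemma ractM m b b' : ract m (b * b') = ract (ract m b) b'.
Proof. by case: hM => [_ [_ [_ [_ [_ []]]]]]. Qed.
Lemma ract1 m : ract m 1 = m.
Proof. by case: hM => [_ [_ [_ [_ [_ []]]]]]. Qed.
Lemma lact_ract a m b : lact a (ract m b) = ract (lact a m) b.
Proof. by case: hM. Qed.

Lemma lact0r a : lact a 0 = 0.
Proof. by rewrite -[X in lact _ X](scale0r (0 : M)) lactZr scale0r. Qed.
Lemma lact0l m : lact 0 m = 0.
Proof. by rewrite -[X in lact X _](scale0r (0 : A)) lactZl scale0r. Qed.
Lemma ract0l b : ract 0 b = 0.
Proof. by rewrite -[X in ract X _](scale0r (0 : M)) ractZl scale0r. Qed.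
Lemma ract0r m : ract m 0 = 0.
Proof. by rewrite -[X in ract _ X](scale0r (0 : B)) ractZr scale0r. Qed.

Lemma tri_aD (X Y : T) : tri_a (X + Y) = tri_a X + tri_a Y. Proof. by []. Qed.
Lemma tri_mD (X Y : T) : tri_m (X + Y) = tri_m X + tri_m Y. Proof. by []. Qed.
Lemma tri_bD (X Y : T) : tri_b (X + Y) = tri_b X + tri_b Y. Proof. by []. Qed.
Lemma tri_aZ k (X : T) : tri_a (k *: X) = k *: tri_a X. Proof. by []. Qed.
Lemma tri_mZ k (X : T) : tri_m (k *: X) = k *: tri_m X. Proof. by []. Qed.
Lemma tri_bZ k (X : T) : tri_b (k *: X) = k *: tri_b X. Proof. by []. Qed.
Lemma tri_aM (X Y : T) : tri_a (mul X Y) = tri_a X * tri_a Y. Proof. by []. Qed.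
Lemma tri_mM (X Y : T) :
  tri_m (mul X Y) = lact (tri_a X) (tri_m Y) + ract (tri_m X) (tri_b Y).
Proof. by []. Qed.
Lemma tri_bM (X Y : T) : tri_b (mul X Y) = tri_b X * tri_b Y. Proof. by []. Qed.
Lemma tri_a_mk a m b : tri_a (tri_mk a m b : T) = a. Proof. by []. Qed.
Lemma tri_m_mk a m b : tri_m (tri_mk a m b : T) = m. Proof. by []. Qed.
Lemma tri_b_mk a m b : tri_b (tri_mk a m b : T) = b. Proof. by []. Qed.

Definition tri_entryE := (tri_aD, tri_mD, tri_bD, tri_aZ, tri_mZ, tri_bZ,
  tri_aM, tri_mM, tri_bM, tri_a_mk, tri_m_mk, tri_b_mk).

Lemma tri_ext (X Y : T) :
  tri_a X = tri_a Y -> tri_m X = tri_m Y -> tri_b X = tri_b Y -> X = Y.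
Proof.
case: X => [[a m] b]; case: Y => [[a' m'] b'].
by rewrite /tri_a /tri_m /tri_b /= => -> -> ->.
Qed.

Lemma tri_mulDr (X Y Z : T) : mul X (Y + Z) = mul X Y + mul X Z.
Proof. by apply: tri_ext; rewrite !tri_entryE ?mulrDr // lactDr ractDr addrACA. Qed.
Lemma tri_mulDl (X Y Z : T) : mul (X + Y) Z = mul X Z + mul Y Z.
Proof. by apply: tri_ext; rewrite !tri_entryE ?mulrDl // lactDl ractDl addrACA. Qed.
Lemma tri_mulZr k (X Y : T) : mul X (k *: Y) = k *: mul X Y.
Proof. by apply: tri_ext; rewrite !tri_entryE ?scalerAr // lactZr ractZr scalerDr. Qed.
Lemma tri_mulZl k (X Y : T) : mul (k *: X) Y = k *: mul X Y.
Proof. by apply: tri_ext; rewrite !tri_entryE ?scalerAl // lactZl ractZl scalerDr. Qed.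
Lemma tri_mul1r (X : T) : mul one X = X.
Proof. by apply: tri_ext; rewrite !tri_entryE ?mul1r // lact1 ract0l addr0. Qed.
Lemma tri_mulr1 (X : T) : mul X one = X.
Proof. by apply: tri_ext; rewrite !tri_entryE ?mulr1 // lact0r ract1 add0r. Qed.
Lemma tri_mulA (X Y Z : T) : mul X (mul Y Z) = mul (mul X Y) Z.
Proof.
apply: tri_ext; rewrite !tri_entryE ?mulrA //.
by rewrite lactDr ractDl lactM lact_ract ractM addrA.
Qed.

Lemma tri_mulr0 (X : T) : mul X 0 = 0.
Proof. by rewrite -[X in mul _ X](scale0r (0 : T)) tri_mulZr scale0r. Qed.
Lemma tri_mul0r (X : T) : mul 0 X = 0.
Proof. by rewrite -[X in mul X _](scale0r (0 : T)) tri_mulZl scale0r. Qed.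
Lemma tri_mulBr (X Y Z : T) : mul X (Y - Z) = mul X Y - mul X Z.
Proof. by rewrite tri_mulDr -scaleN1r tri_mulZr scaleN1r. Qed.
Lemma tri_mulBl (X Y Z : T) : mul (X - Y) Z = mul X Z - mul Y Z.
Proof. by rewrite tri_mulDl -scaleN1r tri_mulZl scaleN1r. Qed.

Section LinearMaps.
Variable F : T -> T.
Hypothesis hF : tri_linear F.

Lemma tri_linD X Y : F (X + Y) = F X + F Y. Proof. exact: hF.1. Qed.
Lemma tri_linZ k X : F (k *: X) = k *: F X. Proof. exact: hF.2. Qed.
Lemma tri_lin0 : F 0 = 0.
Proof. by rewrite -[X in F X](scale0r (0 : T)) tri_linZ scale0r. Qed.

Lemma tri_lin_sum N (G : 'I_N -> T) : F (\sum_(i < N) G i) = \sum_(i < N) F (G i).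
Proof.
elim: N G => [|N IH] G; first by rewrite !big_ord0 tri_lin0.
by rewrite !big_ord_recr /= tri_linD IH.
Qed.
End LinearMaps.

Lemma tri_linear_lmul X : tri_linear (mul X).
Proof. by split=> [Y Z|k Y]; [exact: tri_mulDr | exact: tri_mulZr]. Qed.
Lemma tri_linear_rmul X : tri_linear (mul^~ X).
Proof. by split=> [Y Z|k Y]; [exact: tri_mulDl | exact: tri_mulZl]. Qed.
Lemma tri_linear_comp (F G : T -> T) :
  tri_linear F -> tri_linear G -> tri_linear (F \o G).
Proof.
by move=> hF hG; split=> [X Y|k X] /=; rewrite ?(tri_linD hG) ?(tri_linZ hG)
  ?(tri_linD hF) ?(tri_linZ hF).
Qed.

Lemma tri_exp_binomial (X : T) (t : K) N :
  exp (one + t *: X) N = \sum_(k < N.+1) (t ^+ k * 'C(N, k)%:R) *: exp X k.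
Proof.
elim: N => [|N IH].
  by rewrite big_ord_recl big_ord0 expr0 mul1r mulr1n scale1r addr0.
rewrite [LHS]/= IH tri_mulDl tri_mul1r tri_mulZl (tri_lin_sum (tri_linear_lmul _)).
symmetry; rewrite big_ord_recl expr0 mul1r bin0 mulr1n scale1r.
under eq_bigr => i _ do rewrite lift0 binS natrD mulrDr scalerDl.
rewrite big_split /= [X in _ = X + _]big_ord_recl expr0 mul1r bin0 mulr1n.
rewrite scale1r -addrA; congr (_ + _).
rewrite [X in X + _ = _]big_ord_recr /= bin_small // mulr0 scale0r addr0.
congr (_ + _); rewrite scaler_sumr; apply: eq_bigr => i _.
by rewrite tri_mulZr scalerA exprS mulrA.
Qed.

Lemma tri_lin_binomial F Y t N : tri_linear F -> F (exp (one + t *: Y) N) =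
  \sum_(k < N.+1) t ^+ k *: ('C(N, k)%:R *: F (exp Y k)).
Proof.
move=> hF; rewrite tri_exp_binomial (tri_lin_sum hF); apply: eq_bigr => i _.
by rewrite (tri_linZ hF) scalerA.
Qed.

Section Linearization.
Variables (Psi P1 : T -> T) (P2 : T -> T -> T) (N : nat).
Hypotheses (hPsi : tri_linear Psi) (hP1 : tri_linear P1).
Hypotheses (hP2 : forall Y, tri_linear (P2 Y)) (N_gt0 : (0 < N)%N).
(* The shape taken by both identities (i) and (ii) at [X = 1 + t Y]. *)
Hypothesis hexp : forall Y (t : K), Psi (exp (one + t *: Y) N.+1) =
  P1 (exp (one + t *: Y) N) + t *: P2 Y (exp (one + t *: Y) N).

Lemma linearized_coefs Y :
  N.+1%:R *: Psi Y = N%:R *: P1 Y + P2 Y one /\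
  'C(N.+1, 2)%:R *: Psi (mul Y Y) = 'C(N, 2)%:R *: P1 (mul Y Y) + N%:R *: P2 Y Y.
Proof.
pose p k := 'C(N.+1, k)%:R *: Psi (exp Y k).
pose u k := 'C(N, k)%:R *: P1 (exp Y k).
pose v k := 'C(N, k)%:R *: P2 Y (exp Y k).
have u_top : u N.+1 = 0 by rewrite /u bin_small // scale0r.
have expansion t : t != 0 -> \sum_(k < N.+2) t ^+ k *: p k =
    \sum_(k < N.+1) t ^+ k *: u k + t *: \sum_(k < N.+1) t ^+ k *: v k.
  by move=> _; rewrite -tri_lin_binomial // hexp !tri_lin_binomial.
have coef := sum_powers_coef_shift u_top expansion.
split; [move: (coef 1%N isT) | move: (coef 2%N N_gt0)];
  by rewrite /p /u /v /= !tri_mulr1 !bin1 ?bin0 ?scale1r.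
Qed.

Lemma linearized_square Y : P1 (mul Y Y) + P2 (mul Y Y) one = 2%:R *: P2 Y Y.
Proof.
exact: add_eq_twice_of_binomial_coefs N_gt0
  (linearized_coefs (mul Y Y)).1 (linearized_coefs Y).2.
Qed.
End Linearization.

Lemma tri_mul_sqrD (X Y : T) :
  mul (X + Y) (X + Y) = mul X X + (mul X Y + mul Y X) + mul Y Y.
Proof. by rewrite tri_mulDl !tri_mulDr !addrA. Qed.

Lemma tri_idem_twice_eq0 (E Z : T) : mul E E = E -> Z = 2%:R *: mul E Z -> Z = 0.
Proof.
move=> EE hZ; have EZ : mul E Z = 0.
  by apply: eq0_of_eq_twice; rewrite {1}hZ tri_mulZr tri_mulA EE.
by rewrite hZ EZ scaler0.
Qed.

Lemma tri_linearB (F G : T -> T) :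
  tri_linear F -> tri_linear G -> tri_linear (fun X => F X - G X).
Proof.
move=> hF hG; split=> [X Y|k X] /=.
  by rewrite (tri_linD hF) (tri_linD hG) opprD addrACA.
by rewrite (tri_linZ hF) (tri_linZ hG) -scalerBr.
Qed.

Lemma tri_invertible_lcancel (G : T) :
  tri_invertible lact ract G -> forall Y Z, mul G Y = mul G Z -> Y = Z.
Proof.
move=> [H [_ HG]] Y Z /(congr1 (mul H)).
by rewrite !tri_mulA HG !tri_mul1r.
Qed.

Section FaithfulBimodule.
Hypotheses (hfl : faithful_left lact) (hfr : faithful_right ract).

Section JordanMaps.
Variable D : T -> T.
Hypothesis hD : tri_linear D.
Hypothesis D_sqL : forall Y, D (mul Y Y) = 2%:R *: mul Y (D Y).
Hypothesis D_sqR : forall Y, D (mul Y Y) = 2%:R *: mul (D Y) Y.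

Let two_neq0 : (2%:R : K) != 0. Proof. by rewrite pnatr_eq0. Qed.

Lemma Jordan_polarize (Q : T -> T -> T) :
  (forall X Y Z, Q (X + Y) Z = Q X Z + Q Y Z) ->
  (forall X Y Z, Q X (Y + Z) = Q X Y + Q X Z) ->
  (forall Y, D (mul Y Y) = 2%:R *: Q Y (D Y)) ->
  forall X Y, D (mul X Y + mul Y X) = 2%:R *: (Q X (D Y) + Q Y (D X)).
Proof.
move=> QDl QDr D_sq X Y; have := D_sq (X + Y).
rewrite tri_mul_sqrD !(tri_linD hD) QDl !QDr !D_sq => h.
apply: (addrI (2%:R *: Q X (D X))); apply: (addIr (2%:R *: Q Y (D Y))).
by rewrite h !scalerDr !addrA.
Qed.

Lemma Jordan_comm Y : mul Y (D Y) = mul (D Y) Y.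
Proof. by apply: (scalerI two_neq0); rewrite -D_sqL -D_sqR. Qed.

Lemma Jordan_polarizeL X Y :
  D (mul X Y + mul Y X) = 2%:R *: (mul X (D Y) + mul Y (D X)).
Proof. by apply: Jordan_polarize => // *; rewrite ?tri_mulDl ?tri_mulDr. Qed.

Lemma Jordan_polarizeR X Y :
  D (mul X Y + mul Y X) = 2%:R *: (mul (D X) Y + mul (D Y) X).
Proof.
rewrite addrC; apply: (Jordan_polarize (Q := fun X Y => mul Y X)) => // *;
  by rewrite ?tri_mulDl ?tri_mulDr.
Qed.

Local Notation e11 := (tri_mk 1 0 0 : T).

Lemma tri_e11_idem : mul e11 e11 = e11.
Proof. by apply: tri_ext; rewrite !tri_entryE ?mulr1 ?mul0r // lact0r ract0l addr0. Qed.

Lemma Jordan_e11 : D e11 = 0.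
Proof. by apply: (tri_idem_twice_eq0 tri_e11_idem); rewrite -D_sqL tri_e11_idem. Qed.

Lemma Jordan_polarize_e11 X : D (mul X e11 + mul e11 X) = 2%:R *: mul e11 (D X).
Proof. by rewrite Jordan_polarizeL Jordan_e11 tri_mulr0 add0r. Qed.

Lemma Jordan_offdiag_entry X : tri_m (D X) = 0.
Proof.
have : mul e11 (D X) = mul (D X) e11.
  apply: (scalerI two_neq0).
  by rewrite -Jordan_polarize_e11 Jordan_polarizeR Jordan_e11 tri_mul0r addr0.
move=> /(congr1 (@tri_m K A M B)).
by rewrite !tri_entryE lact1 ract0l lact0r ract0r !addr0.
Qed.

Lemma Jordan_offdiag m : D (tri_mk 0 m 0) = 0.
Proof.
apply: (tri_idem_twice_eq0 tri_e11_idem); rewrite -Jordan_polarize_e11; congr D.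
apply: tri_ext; rewrite !tri_entryE ?mulr0 ?mul0r ?addr0 //.
by rewrite lact1 lact0l ract0l ract0r !addr0 add0r.
Qed.

Lemma Jordan_diag_left a : D (tri_mk a 0 0) = 0.
Proof.
have DQ : D (tri_mk a 0 0) = mul e11 (D (tri_mk a 0 0)).
  apply: (scalerI two_neq0); rewrite -Jordan_polarize_e11 -(tri_linZ hD); congr D.
  apply: tri_ext; rewrite !tri_entryE ?lact0r ?ract0l ?mulr0 ?scaler0 ?addr0 //.
  by rewrite mulr1 mul1r scaler_nat mulr2n.
have Db : tri_b (D (tri_mk a 0 0)) = 0 by rewrite DQ tri_bM tri_b_mk mul0r.
apply: tri_ext; rewrite ?Jordan_offdiag_entry ?Db //; apply: hfl => m.
have := congr1 (@tri_m K A M B) (Jordan_comm (tri_mk a m 0)).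
have -> : tri_mk a m 0 = tri_mk a 0 0 + tri_mk 0 m 0 :> T.
  by apply: tri_ext; rewrite !tri_entryE ?addr0 ?add0r.
rewrite (tri_linD hD) Jordan_offdiag addr0 !tri_entryE Jordan_offdiag_entry Db.
by rewrite lact0r !ract0r ract0l !addr0 add0r => /esym.
Qed.

Lemma Jordan_diag_right b : D (tri_mk 0 0 b) = 0.
Proof.
have eDQ : mul e11 (D (tri_mk 0 0 b)) = 0.
  apply: (scalerI two_neq0); rewrite -Jordan_polarize_e11 scaler0 -(tri_lin0 hD).
  congr D; apply: tri_ext; rewrite !tri_entryE ?mulr0 ?mul0r ?addr0 //.
  by rewrite lact1 lact0l !ract0l !addr0.
have Da : tri_a (D (tri_mk 0 0 b)) = 0.
  by have := congr1 (@tri_a K A M B) eDQ; rewrite tri_aM tri_a_mk mul1r.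
apply: tri_ext; rewrite ?Jordan_offdiag_entry ?Da //; apply: hfr => m.
have := congr1 (@tri_m K A M B) (Jordan_comm (tri_mk 0 m b)).
have -> : tri_mk 0 m b = tri_mk 0 m 0 + tri_mk 0 0 b :> T.
  by apply: tri_ext; rewrite !tri_entryE ?addr0 ?add0r.
rewrite (tri_linD hD) Jordan_offdiag add0r !tri_entryE Jordan_offdiag_entry Da.
by rewrite !add0r ?lact0l ?ract0l ?add0r ?addr0.
Qed.

Lemma Jordan_map_eq0 X : D X = 0.
Proof.
have -> : X = tri_mk (tri_a X) 0 0 + tri_mk 0 (tri_m X) 0 + tri_mk 0 0 (tri_b X).
  by apply: tri_ext; rewrite !tri_entryE ?addr0 ?add0r.
by rewrite !(tri_linD hD) Jordan_diag_left Jordan_offdiag Jordan_diag_right !addr0.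
Qed.
End JordanMaps.

Lemma tri_lmul_of_square_identities (Om : T -> T) :
  tri_linear Om -> tri_central lact ract (Om one) ->
  (forall Y, Om (mul Y Y) + mul (Om one) (mul Y Y) = 2%:R *: mul Y (Om Y)) ->
  (forall Y, Om (mul Y Y) + mul (Om one) (mul Y Y) = 2%:R *: mul (Om Y) Y) ->
  forall X, Om X = mul (Om one) X.
Proof.
move=> hOm hc sqL sqR X; set c := Om one in hc sqL sqR *.
have cYY Y : mul Y (mul c Y) = mul c (mul Y Y) by rewrite tri_mulA -hc -tri_mulA.
have Y_cY Y : mul (mul c Y) Y = mul c (mul Y Y) by rewrite -tri_mulA.
apply/eqP; rewrite -subr_eq0; apply/eqP; move: X.
apply: Jordan_map_eq0 => [|Y|Y]; first exact: tri_linearB hOm (tri_linear_lmul c).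
  by rewrite tri_mulBr scalerBr cYY -sqL scaler_nat mulr2n opprD addrA addrK.
by rewrite tri_mulBl scalerBr Y_cY -sqR scaler_nat mulr2n opprD addrA addrK.
Qed.

Section FunctionalIdentities.
Variables (Psi Omega : T -> T) (gamma : T) (N : nat).
Hypotheses (hPsi : tri_linear Psi) (hOmega : tri_linear Omega).
Hypotheses (hc : tri_central lact ract (Omega one)).
Hypotheses (hgamma : tri_invertible lact ract gamma) (N_gt0 : (0 < N)%N).
Local Notation c := (Omega one).

Let gamma_cancel := tri_invertible_lcancel hgamma.

Let Psi_lmul_of_first_order (Z : T -> T) :
  (forall Y, N.+1%:R *: Psi Y = N%:R *: Z Y + Z Y) -> forall Y, Psi Y = Z Y.
Proof.
move=> h Y; apply: (@scalerI _ _ (N.+1%:R : K)); first by rewrite pnatr_eq0.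
by rewrite h -[in RHS]natr1 scalerDl scale1r.
Qed.

Lemma tri_lmul_of_identity_i :
  (forall X, Psi (exp X N.+1) = mul gamma (mul (exp X N) (Omega X)) /\
             Psi (exp X N.+1) = mul gamma (mul (Omega X) (exp X N))) ->
  (forall X, Omega X = mul c X) /\ (forall X, Psi X = mul (mul gamma c) X).
Proof.
move=> h.
pose P1L Z := mul gamma (mul Z c); pose P2L Y Z := mul gamma (mul Z (Omega Y)).
pose P1R Z := mul gamma (mul c Z); pose P2R Y Z := mul gamma (mul (Omega Y) Z).
have linL : forall Y t, Psi (exp (one + t *: Y) N.+1) =
    P1L (exp (one + t *: Y) N) + t *: P2L Y (exp (one + t *: Y) N).
  move=> Y t; rewrite (h _).1 (tri_linD hOmega) (tri_linZ hOmega).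
  by rewrite tri_mulDr tri_mulZr tri_mulDr tri_mulZr.
have linR : forall Y t, Psi (exp (one + t *: Y) N.+1) =
    P1R (exp (one + t *: Y) N) + t *: P2R Y (exp (one + t *: Y) N).
  move=> Y t; rewrite (h _).2 (tri_linD hOmega) (tri_linZ hOmega).
  by rewrite tri_mulDl tri_mulZl tri_mulDr tri_mulZr.
have hP1L : tri_linear P1L := tri_linear_comp (tri_linear_lmul _) (tri_linear_rmul _).
have hP2L Y : tri_linear (P2L Y) :=
  tri_linear_comp (tri_linear_lmul _) (tri_linear_rmul _).
have hP1R : tri_linear P1R := tri_linear_comp (tri_linear_lmul _) (tri_linear_lmul _).
have hP2R Y : tri_linear (P2R Y) :=
  tri_linear_comp (tri_linear_lmul _) (tri_linear_lmul _).
have OmE : forall X, Omega X = mul c X.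
  apply: tri_lmul_of_square_identities => // Y; apply: gamma_cancel;
    rewrite tri_mulDr tri_mulZr.
  - rewrite -(linearized_square hPsi hP1L hP2L N_gt0 linL).
    by rewrite /P1L /P2L tri_mul1r addrC hc.
  - rewrite -(linearized_square hPsi hP1R hP2R N_gt0 linR).
    by rewrite /P1R /P2R tri_mulr1 addrC.
split=> //; apply: Psi_lmul_of_first_order => Y.
rewrite (linearized_coefs hPsi hP1L hP2L N_gt0 linL Y).1.
by rewrite /P1L /P2L tri_mul1r (OmE Y) -hc -tri_mulA.
Qed.

Lemma tri_lmul_of_identity_ii :
  (forall X, Psi (exp X N.+1) = mul gamma (mul X (Omega (exp X N))) /\
             Psi (exp X N.+1) = mul gamma (mul (Omega (exp X N)) X)) ->
  (forall X, Omega X = mul c X) /\ (forall X, Psi X = mul (mul gamma c) X).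
Proof.
move=> h.
pose P1 Z := mul gamma (Omega Z).
pose P2L Y Z := mul gamma (mul Y (Omega Z)); pose P2R Y Z := mul gamma (mul (Omega Z) Y).
have linL : forall Y t, Psi (exp (one + t *: Y) N.+1) =
    P1 (exp (one + t *: Y) N) + t *: P2L Y (exp (one + t *: Y) N).
  by move=> Y t; rewrite (h _).1 tri_mulDl tri_mul1r tri_mulZl tri_mulDr tri_mulZr.
have linR : forall Y t, Psi (exp (one + t *: Y) N.+1) =
    P1 (exp (one + t *: Y) N) + t *: P2R Y (exp (one + t *: Y) N).
  by move=> Y t; rewrite (h _).2 tri_mulDr tri_mulr1 tri_mulZr tri_mulDr tri_mulZr.
have hP1 : tri_linear P1 := tri_linear_comp (tri_linear_lmul _) hOmega.
have hP2L Y : tri_linear (P2L Y) :=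
  tri_linear_comp (tri_linear_lmul _) (tri_linear_comp (tri_linear_lmul _) hOmega).
have hP2R Y : tri_linear (P2R Y) :=
  tri_linear_comp (tri_linear_lmul _) (tri_linear_comp (tri_linear_rmul _) hOmega).
have OmE : forall X, Omega X = mul c X.
  apply: tri_lmul_of_square_identities => // Y; apply: gamma_cancel;
    rewrite tri_mulDr tri_mulZr.
  - by rewrite -(linearized_square hPsi hP1 hP2L N_gt0 linL) /P1 /P2L hc.
  - by rewrite -(linearized_square hPsi hP1 hP2R N_gt0 linR).
split=> //; apply: Psi_lmul_of_first_order => Y.
rewrite (linearized_coefs hPsi hP1 hP2L N_gt0 linL Y).1.
by rewrite /P1 /P2L (OmE Y) -hc -tri_mulA.
Qed.
End FunctionalIdentities.
End FaithfulBimodule.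

Section Norms.
Variables (nA : A -> K) (nM : M -> K) (nB : B -> K).
Hypotheses (hA : is_normed_algebra nA) (hB : is_normed_algebra nB).
Hypothesis hMn : is_normed_bimodule lact ract nA nB nM.
Local Notation norm := (tri_norm nA nM nB).

Lemma tri_norm_ge0 X : 0 <= norm X.
Proof.
case: hA hB hMn => [[nA0 _ _ _] _] [[nB0 _ _ _] _] [[nM0 _ _ _] _ _].
by rewrite !addr_ge0.
Qed.

Lemma tri_norm_mul X Y : norm (mul X Y) <= norm X * norm Y.
Proof.
case: hA hB hMn => [[nA0 _ _ _] nAM] [[nB0 _ _ _] nBM] [[nM0 _ nMD _] nMl nMr].
rewrite /tri_norm !tri_entryE.
set xa := nA (tri_a X); set xm := nM (tri_m X); set xb := nB (tri_b X).
set ya := nA (tri_a Y); set ym := nM (tri_m Y); set yb := nB (tri_b Y).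
apply: (@le_trans _ _ (xa * ya + (xa * ym + xm * yb) + xb * yb)).
  apply: lerD; [apply: lerD|]; [exact: nAM| |exact: nBM].
  by apply: le_trans (nMD _ _) _; apply: lerD.
rewrite -subr_ge0.
have -> : (xa + xm + xb) * (ya + ym + yb) - (xa * ya + (xa * ym + xm * yb) + xb * yb)
  = xa * yb + xm * ya + xm * ym + xb * ya + xb * ym by ring.
by rewrite !addr_ge0 // mulr_ge0 // ?nA0 ?nB0 ?nM0.
Qed.

Lemma tri_continuous_lmul (Z : T) (F : T -> T) :
  (forall X, F X = mul Z X) -> tri_continuous nA nM nB F.
Proof.
move=> FE X eps eps_gt0.
have z1_gt0 : 0 < norm Z + 1 by rewrite ltr_wpDl ?tri_norm_ge0.
exists (eps / (norm Z + 1)) => [|Y]; first by rewrite divr_gt0.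
rewrite -[tri_add Y _]/(Y - X) -[tri_add (F Y) _]/(F Y - F X) !FE -tri_mulBr.
rewrite ltr_pdivlMr // => hY; apply: le_lt_trans (tri_norm_mul _ _) _.
by rewrite mulrC (le_lt_trans _ hY) // ler_wpM2l ?tri_norm_ge0 // lerDl.
Qed.
End Norms.
End TriangularAlgebra.

Theorem corollary2p3 (R : realType) (isC : bool)
  (A B : algType (RorC R isC)) (M : lmodType (RorC R isC))
  (lact : A -> M -> M) (ract : M -> B -> M)
  (nA : A -> RorC R isC) (nB : B -> RorC R isC) (nM : M -> RorC R isC)
  (hA : is_normed_algebra nA) (hB : is_normed_algebra nB)
  (hM : is_bimodule lact ract)
  (hMn : is_normed_bimodule lact ract nA nB nM)
  (hfl : faithful_left lact) (hfr : faithful_right ract)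
  (n : nat) (hn : (1 < n)%N)
  (gamma : tri A M B) (hgZ : tri_central lact ract gamma)
  (hginv : tri_invertible lact ract gamma)
  (Psi Omega : tri A M B -> tri A M B)
  (hPsi : tri_linear Psi) (hOmega : tri_linear Omega)
  (hO1 : tri_central lact ract (Omega (tri_one A M B))) :
  ((forall X : tri A M B,
       Psi (tri_exp lact ract X n)
         = tri_mul lact ract gamma
             (tri_mul lact ract (tri_exp lact ract X n.-1) (Omega X))
    /\ Psi (tri_exp lact ract X n)
         = tri_mul lact ract gamma
             (tri_mul lact ract (Omega X) (tri_exp lact ract X n.-1)))
   \/
   (forall X : tri A M B,
       Psi (tri_exp lact ract X n)
         = tri_mul lact ract gamma
             (tri_mul lact ract X (Omega (tri_exp lact ract X n.-1)))
    /\ Psi (tri_exp lact ract X n)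
         = tri_mul lact ract gamma
             (tri_mul lact ract (Omega (tri_exp lact ract X n.-1)) X))) ->
  tri_continuous nA nM nB Psi /\ tri_continuous nA nM nB Omega.
Proof.
case: n hn => [//|N] N_gt0 identities.
set c := Omega (tri_one A M B) in hO1.
have [OmegaE PsiE] : (forall X, Omega X = tri_mul lact ract c X) /\
                     (forall X, Psi X = tri_mul lact ract (tri_mul lact ract gamma c) X).
  by case: identities; [apply: tri_lmul_of_identity_i | apply: tri_lmul_of_identity_ii].
by split; [apply: tri_continuous_lmul PsiE | apply: tri_continuous_lmul OmegaE].
Qed.
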